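(* Fix any total budget $\mathrm{TB}\in\mathbb N_0$. If $G$ is a number game, then (for any budget state) both Left and Right optimally play $0$-bid strategies in $G$, i.e. bidding $0$ is optimal for each player at every follower of $G$.
   Context: Game forms are defined recursively: $G=\{G^{\mathcal L}\mid G^{\mathcal R}\}$ with finite sets of Left and Right options, and finite birthday. A follower of $G$ is a game form reachable from $G$ by a possibly empty sequence of moves. The budget set for total budget $\mathrm{TB}$ is $\mathcal B=\{0,\dots,\mathrm{TB},\hat 0,\dots,\widehat{\mathrm{TB}}\}$: state $p$ (resp. $\hat p$) means Left holds $p$ dollars and Right holds $\mathrm{TB}-p$, and Right (resp. Left) holds the tie-breaking marker. Play of $(G,\tilde p)$: at every position (terminal ones included) both players bid simultaneously, Left $\ell\in\{0,\dots,p\}$, Right $r\in\{0,\dots,\mathrm{TB}-p\}$. If Left holds the marker (state $\hat p$): if $\ell>r$ Left moves to $(G^L,\widehat{p-\ell})$, or, including the marker (allowed when $\ell\ge r$), to $(G^L,p-\ell)$; if $\ell=r$ Left wins, the marker passes to Right, play continues at $(G^L,p-\ell)$; if $\ell<r$ Right moves to $(G^R,\widehat{p+r})$. Symmetrically when Right holds the marker (state $p$): if $r>\ell$ Right moves to $(G^R,p+r)$ or, including the marker, to $(G^R,\widehat{p+r})$; if $r=\ell$ Right wins, the marker passes to Left, play continues at $(G^R,\widehat{p+r})$; if $r<\ell$ Left moves to $(G^L,p-\ell)$. A player who wins a bid but has no option loses. $o(G,\tilde p)\in\{\mathrm L,\mathrm R\}$ is the winner under optimal play. Disjunctive sum $G+H=\{G^{\mathcal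 L}+H,G+H^{\mathcal L}\mid G^{\mathcal R}+H,G+H^{\mathcal R}\}$. $G\ge H$ means $o(G+X,\tilde p)\ge o(H+X,\tilde p)$ for all game forms $X$ and all $\tilde p\in\mathcal B$ (with $\mathrm L>\mathrm R$); $G>H$ means $G\ge H$ and not $H\ge G$. A game form $G$ is a number if all its options are numbers and $G^L<G<G^R$ for all $G^L\in G^{\mathcal L}$, $G^R\in G^{\mathcal R}$. *)

From Stdlib Require Import List Arith Lia.
Import ListNotations.

(* Game forms: finite lists of Left and Right options; finite birthday is
   automatic since the type is inductive. *)
Inductive game : Type := Game : list game -> list game -> game.

Definition lopts (G : game) : list game := match G with Game l _ => l end.
Definition ropts (G : game) : list game := match G with Game _ r => r end.

Inductive follower : game -> game -> Prop :=
| follower_refl G : follower G G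
| follower_L G GL H : In GL (lopts G) -> follower H GL -> follower H G
| follower_R G GR H : In GR (ropts G) -> follower H GR -> follower H G.

(* Budget states: a pair (p, m) with p <= TB Left's dollars (Right holds TB - p);
   m = true  is the state  \hat p  (Left holds the tie-breaking marker),
   m = false is the state  p       (Right holds the tie-breaking marker). *)

(* Outcome of one bidding round at a position with Left options [ls], Right options
   [rs], state (p, m), Left bid [l], Right bid [r].  [f g p' m'] is the outcome
   (true = Left wins) of the continuation (g, (p', m')).
   The winner of the bid chooses an option (and, where allowed, the marker
   transfer); a bid winner without options loses (empty [existsb] = false for Left,
   empty [forallb] = true, i.e. Right loses). *)
Definition round (f : game -> nat -> bool -> bool) (ls rs : list game)
  (p : nat) (m : bool) (l r : nat) : bool :=
  let Lmove p' ms := existsb (fun g => existsb (fun m' => f g p' m') ms) ls in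
  let Rmove p' ms := forallb (fun g => forallb (fun m' => f g p' m') ms) rs in
  if m then
    if Nat.ltb r l then Lmove (p - l) [true; false]      (* l > r : keep or include marker *)
    else if Nat.eqb l r then Lmove (p - l) [false]       (* tie: Left wins, marker to Right *)
    else Rmove (p + r) [true]
  else
    if Nat.ltb l r then Rmove (p + r) [false; true]      (* r > l : keep or include marker *)
    else if Nat.eqb l r then Rmove (p + r) [true]        (* tie: Right wins, marker to Left *)
    else Lmove (p - l) [false].

(* [lwin TB G p m = true]  iff  o(G, state) = L, i.e. Left has a bid l in {0..p}
   such that for every Right bid r in {0..TB-p} Left wins after that round. *)
Fixpoint lwin (TB : nat) (G : game) (p : nat) (m : bool) {struct G} : bool :=
  match G with
  | Game ls rs =>
      existsb (fun l => forallb (fun r => round (lwin TB) ls rs p m l r)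
                                (seq 0 (S (TB - p))))
              (seq 0 (S p))
  end.

Inductive player : Type := Lp | Rp.
Definition outcome (TB : nat) (G : game) (p : nat) (m : bool) : player :=
  if lwin TB G p m then Lp else Rp.

(* Disjunctive sum  G + H = {G^L + H, G + H^L | G^R + H, G + H^R}. *)
Fixpoint gadd (G H : game) {struct G} : game :=
  match G with
  | Game gl gr =>
      let fix addG (H : game) : game :=
        match H with
        | Game hl hr =>
            Game (map (fun g => gadd g H) gl ++ map addG hl)
                 (map (fun g => gadd g H) gr ++ map addG hr)
        end in
      addG H
  end.

Definition ple (a b : player) : Prop :=
  match a, b with Lp, Rp => False | _, _ => True end.

Definition gge (TB : nat) (G H : game) : Prop :=
  forall (X : game) (p : nat) (m : bool), p <= TB ->
    ple (outcome TB (gadd H X) p m) (outcome TB (gadd G X) p m).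

Definition ggt (TB : nat) (G H : game) : Prop := gge TB G H /\ ~ gge TB H G.

Inductive is_number (TB : nat) : game -> Prop :=
| is_number_intro (ls rs : list game) :
    (forall GL, In GL ls -> is_number TB GL) ->
    (forall GR, In GR rs -> is_number TB GR) ->
    (forall GL, In GL ls -> ggt TB (Game ls rs) GL) ->
    (forall GR, In GR rs -> ggt TB GR (Game ls rs)) ->
    is_number TB (Game ls rs).

From Stdlib Require Import List Arith Lia Bool.
Import ListNotations.

(* By induction on the number G, its outcome does not depend on how the money
   is split, and holding the tie-breaking marker never helps Left.  Hence Left
   wins G holding the marker iff some Left option is a Left win once the marker
   has passed to Right, and wins G without the marker iff every Right option is
   a Left win once the marker has passed to Left.  The first condition implies
   the second: otherwise Left would lose some G^R from the state where she holds
   all the money and the marker, a state from which she wins G, contradicting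
   G <= G^R in the sum with 0.  With outcomes this simple, a zero bid already
   secures the outcome against every bid of the opponent. *)

Lemma existsb_ext_in {A : Type} (f g : A -> bool) (l : list A) :
  (forall x, In x l -> f x = g x) -> existsb f l = existsb g l.
Proof.
  induction l as [|a l IH]; intros Hfg; simpl; auto.
  rewrite (Hfg a (in_eq a l)), IH by (intros x Hx; apply Hfg, in_cons, Hx).
  reflexivity.
Qed.

Lemma forallb_ext_in {A : Type} (f g : A -> bool) (l : list A) :
  (forall x, In x l -> f x = g x) -> forallb f l = forallb g l.
Proof.
  induction l as [|a l IH]; intros Hfg; simpl; auto.
  rewrite (Hfg a (in_eq a l)), IH by (intros x Hx; apply Hfg, in_cons, Hx).
  reflexivity.
Qed.

Fixpoint game_ind_in (P : game -> Prop)
  (HP : forall ls rs, (forall g, In g ls -> P g) -> (forall g, In g rs -> P g) ->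
        P (Game ls rs)) (G : game) : P G :=
  match G with
  | Game ls rs =>
      let fix all_in (l : list game) : forall g, In g l -> P g :=
        match l with
        | [] => fun g (i : In g []) => match i with end
        | h :: t => fun g i =>
            match i with
            | or_introl e => eq_ind h P (game_ind_in P HP h) g e
            | or_intror i' => all_in t g i'
            end
        end in
      HP ls rs (all_in ls) (all_in rs)
  end.

Lemma gadd_0r (G : game) : gadd G (Game [] []) = G.
Proof.
  induction G as [ls rs IHl IHr] using game_ind_in; cbn [gadd map].
  rewrite !app_nil_r, (map_ext_in _ _ ls IHl), (map_ext_in _ _ rs IHr), !map_id.
  reflexivity.
Qed.

Lemma follower_number (TB : nat) (G H : game) :
  follower H G -> is_number TB G -> is_number TB H.
Proof.
  induction 1 as [G|G GL H Hin _ IH|G GR H Hin _ IH]; intros HG; auto;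
    apply IH; destruct G as [ls rs]; inversion HG; subst; simpl in Hin; auto.
Qed.

Definition left_wins_bid (m : bool) (l r : nat) : bool :=
  if m then r <=? l else r <? l.

Lemma lwin_spec (TB : nat) (ls rs : list game) (p : nat) (m : bool) :
  lwin TB (Game ls rs) p m = true <->
  exists l, l <= p /\
    forall r, r <= TB - p -> round (lwin TB) ls rs p m l r = true.
Proof.
  cbn [lwin]; rewrite existsb_exists.
  split; intros [l [Hl Hwin]]; exists l; rewrite in_seq in *; split; try lia.
  - intros r Hr; rewrite forallb_forall in Hwin; apply Hwin, in_seq; lia.
  - apply forallb_forall; intros r Hr; rewrite in_seq in Hr; apply Hwin; lia.
Qed.

Section ColdGames.

Variable TB : nat.

(* The invariant of the induction: the money split is irrelevant, and holding
   the marker (i.e. having to move on a tie) never helps Left. *)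
Definition cold (g : game) : Prop :=
  (forall q m, q <= TB -> lwin TB g q m = lwin TB g 0 m) /\
  (lwin TB g 0 true = true -> lwin TB g 0 false = true).

Lemma cold_left_move (g : game) (q : nat) (ms : list bool) :
  cold g -> q <= TB -> In false ms ->
  existsb (lwin TB g q) ms = lwin TB g 0 false.
Proof.
  intros [Hsplit Hmarker] Hq Hms; apply eq_iff_eq_true; split.
  - rewrite existsb_exists; intros [[|] [_ Hwin]]; rewrite Hsplit in Hwin; auto.
  - intros Hwin; apply existsb_exists; exists false; rewrite Hsplit; auto.
Qed.

Lemma cold_right_move (g : game) (q : nat) (ms : list bool) :
  cold g -> q <= TB -> In true ms ->
  forallb (lwin TB g q) ms = lwin TB g 0 true.
Proof.
  intros [Hsplit Hmarker] Hq Hms; apply eq_iff_eq_true; split.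
  - rewrite forallb_forall; intros Hwin; rewrite <- (Hsplit q); auto.
  - intros Hwin; apply forallb_forall; intros [|] _; rewrite Hsplit; auto.
Qed.

Definition left_move_wins (ls : list game) : bool :=
  existsb (fun g => lwin TB g 0 false) ls.

Definition right_move_loses (rs : list game) : bool :=
  forallb (fun g => lwin TB g 0 true) rs.

Variables ls rs : list game.
Hypothesis cold_ls : forall g, In g ls -> cold g.
Hypothesis cold_rs : forall g, In g rs -> cold g.

Lemma round_cold (p : nat) (m : bool) (l r : nat) :
  p <= TB -> l <= p -> r <= TB - p ->
  round (lwin TB) ls rs p m l r =
  if left_wins_bid m l r then left_move_wins ls else right_move_loses rs.
Proof.
  intros Hp Hl Hr; unfold round, left_wins_bid; destruct m;
    [destruct (Nat.ltb_spec r l), (Nat.eqb_spec l r), (Nat.leb_spec r l)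
    |destruct (Nat.ltb_spec l r), (Nat.eqb_spec l r), (Nat.ltb_spec r l)];
    try lia;
    first [ apply existsb_ext_in; intros g Hg; apply cold_left_move
          | apply forallb_ext_in; intros g Hg; apply cold_right_move ];
    simpl; auto; lia.
Qed.

Lemma lwin_right_broke : lwin TB (Game ls rs) TB true = left_move_wins ls.
Proof.
  apply eq_iff_eq_true; rewrite lwin_spec, Nat.sub_diag; split.
  - intros [l [Hl Hwin]]; specialize (Hwin 0 (le_n 0)).
    rewrite round_cold in Hwin by lia; exact Hwin.
  - intros HA; exists 0; split; [lia|].
    intros r Hr; replace r with 0 by lia; rewrite round_cold; auto; lia.
Qed.

Definition cold_value (m : bool) : bool :=
  if m then left_move_wins ls else right_move_loses rs.

Hypothesis left_wins_right_loses :
  left_move_wins ls = true -> right_move_loses rs = true.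

Lemma round_left_bids_0 (p : nat) (m : bool) (r : nat) :
  p <= TB -> r <= TB - p -> cold_value m = true ->
  round (lwin TB) ls rs p m 0 r = true.
Proof.
  intros Hp Hr Hv; rewrite round_cold by lia; unfold cold_value in Hv.
  destruct m, r; simpl; auto.
Qed.

Lemma round_right_bids_0 (p : nat) (m : bool) (l : nat) :
  p <= TB -> l <= p -> cold_value m = false ->
  round (lwin TB) ls rs p m l 0 = false.
Proof.
  intros Hp Hl Hv; rewrite round_cold by lia; unfold cold_value in Hv.
  destruct m, l; simpl; auto.
  destruct (left_move_wins ls); auto.
  rewrite left_wins_right_loses in Hv; auto.
Qed.

Lemma lwin_cold (p : nat) (m : bool) :
  p <= TB -> lwin TB (Game ls rs) p m = cold_value m.
Proof.
  intros Hp; destruct (cold_value m) eqn:Hv.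
  - apply lwin_spec; exists 0; split; [lia|].
    intros r Hr; apply round_left_bids_0; auto.
  - apply not_true_iff_false; rewrite lwin_spec; intros [l [Hl Hwin]].
    specialize (Hwin 0 (Nat.le_0_l _)).
    rewrite round_right_bids_0 in Hwin by auto; discriminate.
Qed.

End ColdGames.

Lemma number_right_move_loses (TB : nat) (ls rs : list game) :
  (forall g, In g ls -> cold TB g) -> (forall g, In g rs -> cold TB g) ->
  (forall GR, In GR rs -> ggt TB GR (Game ls rs)) ->
  left_move_wins TB ls = true -> right_move_loses TB rs = true.
Proof.
  intros cold_ls cold_rs Hgt HA; apply forallb_forall; intros GR HGR.
  destruct (Hgt GR HGR) as [Hge _].
  specialize (Hge (Game [] []) TB true (le_n TB)).
  unfold outcome in Hge; rewrite !gadd_0r, lwin_right_broke, HA in Hge by auto.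
  destruct (cold_rs GR HGR) as [Hsplit _]; rewrite <- (Hsplit TB true (le_n TB)).
  destruct (lwin TB GR TB true); [reflexivity | contradiction].
Qed.

Lemma number_cold (TB : nat) (G : game) : is_number TB G -> cold TB G.
Proof.
  induction 1 as [ls rs _ cold_ls _ cold_rs _ Hgt].
  pose proof (number_right_move_loses TB ls rs cold_ls cold_rs Hgt) as Hlr.
  split.
  - intros q m Hq; rewrite !lwin_cold; auto; lia.
  - rewrite !lwin_cold; auto; lia.
Qed.

Theorem mainTheorem5 (TB : nat) (G : game) :
  is_number TB G ->
  forall H : game, follower H G ->
  forall (p : nat) (m : bool), p <= TB ->
    (* Left: if Left wins (H, state), bidding 0 wins against every Right bid *)
    (outcome TB H p m = Lp ->
       forall r, r <= TB - p -> round (lwin TB) (lopts H) (ropts H) p m 0 r = true) /\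
    (* Right: if Right wins (H, state), bidding 0 wins against every Left bid *)
    (outcome TB H p m = Rp ->
       forall l, l <= p -> round (lwin TB) (lopts H) (ropts H) p m l 0 = false).
Proof.
  intros HG H Hfollow p m Hp.
  destruct H as [ls rs]; cbn [lopts ropts].
  pose proof (follower_number TB G _ Hfollow HG) as HN.
  inversion HN as [ls' rs' NL NR _ Hgt]; subst.
  assert (cold_ls : forall g, In g ls -> cold TB g) by auto using number_cold.
  assert (cold_rs : forall g, In g rs -> cold TB g) by auto using number_cold.
  pose proof (number_right_move_loses TB ls rs cold_ls cold_rs Hgt) as Hlr.
  unfold outcome; rewrite lwin_cold by auto.
  split; intros Hv.
  - intros r Hr; apply round_left_bids_0; auto.
    destruct (cold_value _ _ _ _); congruence.
  - intros l Hl; apply round_right_bids_0; auto.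
    destruct (cold_value _ _ _ _); congruence.
Qed.
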